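(* Let $Q$ be a finite acyclic quiver with automorphism $\sigma$ and let $\alpha\in\mathcal F_{Q,\sigma}$. Then every primitive element $x\in\mathcal H_v(Q,\sigma)^{\rm prim}_\alpha$ satisfies $\mathbb I_\alpha(x)=\{x,\mathbf 1_\alpha\}=0$; that is, $\mathcal H_v(Q,\sigma)^{\rm prim}_\alpha\subseteq\operatorname{Ker}\mathbb I_\alpha$.
   Context: Let $Q=(Q_0,Q_1)$ be a finite quiver and $\sigma$ an automorphism of $Q$ (a permutation of vertices and arrows compatible with heads and tails). Let $\mathbb F_q$ be a finite field, $\overline{\mathbb F}_q$ its algebraic closure, $F:\overline{\mathbb F}_qQ\to\overline{\mathbb F}_qQ$, $\sum_sx_sp_s\mapsto\sum_sx_s^q\sigma(p_s)$, and $A=\mathfrak A(Q,\sigma;q)=\{a:F(a)=a\}$ (a hereditary $\mathbb F_q$-algebra, finite-dimensional when $Q$ is acyclic). Let $I$ be the set of $\sigma$-orbits of vertices, $\Gamma_1$ the set of $\sigma$-orbits of arrows, $\varepsilon_i,\varepsilon_\rho$ the orbit sizes, and $t\rho,h\rho\in I$ the tail/head orbits of $\rho\in\Gamma_1$; $\Gamma=\Gamma(Q,\sigma)$ is the valued quiver with vertices $I$ and arrows $\Gamma_1$. Euler form: $\langle x,y\rangle=\sum_i\varepsilon_ix_iy_i-\sum_{\rho\in\Gamma_1}\varepsilon_\rho x_{t\rho}y_{h\rho}$ on $\mathbb ZI$; symmetric Euler form $(x,y)=\langle x,y\rangle+\langle y,x\rangle$. The dimension vector of an $A$-module $M$ is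 $\mathbf{dim}M=\sum_i(\dim_{\mathbb F_{q^{\varepsilon_i}}}e_iM)i$, $e_i$ the idempotent of $A$ for $i\in I$. The fundamental set is $\mathcal F_{Q,\sigma}=\{\mu\in\mathbb NI:$ the full subquiver of $\Gamma$ on $\{i:\mu_i\ne0\}$ is connected and $(\mu,i)\le0$ for all $i\in I\}$. With $F^L_{M,N}$ the number of submodules $X\subseteq L$ with $X\cong N$, $L/X\cong M$, $a_M=|\mathrm{Aut}_A(M)|$ and $v=\sqrt q$, the Ringel–Hall algebra $\mathcal H_v(Q,\sigma)$ has $\mathbb C$-basis the isoclasses $[M]$ of finite-dimensional $A$-modules, product $[M][N]=\sum_{[L]}v^{\langle\mathbf{dim}M,\mathbf{dim}N\rangle}F^L_{M,N}[L]$, coproduct $\Delta([M])=\sum_{[X],[Y]}v^{\langle\mathbf{dim}X,\mathbf{dim}Y\rangle}\frac{a_Xa_Y}{a_M}F^M_{X,Y}[X]\otimes[Y]$, unit $1=[0]$, and $\mathbb NI$-grading by dimension vectors. $\mathcal H_v(Q,\sigma)^{\rm prim}_{\mathbf d}=\{x\in\mathcal H_v(Q,\sigma)_{\mathbf d}:\Delta(x)=x\otimes1+1\otimes x\}$. The Green form is $\{[M],[N]\}=\delta_{[M],[N]}/a_M$. Put $\mathbf 1_{\mathbf d}=\sum_{[M]:\mathbf{dim}M=\mathbf d}[M]$ and $\mathbb I_{\mathbf d}:\mathcal H_v(Q,\sigma)_{\mathbf d}\to\mathbb C$, $[M]\mapsto 1/a_M$, so $\mathbb I_{\mathbf d}(x)=\{x,\mathbf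 1_{\mathbf d}\}$. *)

From HB Require Import structures.
From mathcomp Require Import all_boot all_order fingroup perm all_algebra.
Set Implicit Arguments. Unset Strict Implicit. Unset Printing Implicit Defensive.
Import Order.TTheory GRing.Theory Num.Theory.
Local Open Scope ring_scope.

Record quiver := Quiver { Q0 : finType; Q1 : finType; tl : Q1 -> Q0; hd : Q1 -> Q0 }.

Definition arrel (Q : quiver) : rel (Q1 Q) := fun a b => hd a == tl b.

Definition acyclic (Q : quiver) : Prop :=
  forall (a : Q1 Q) (s : seq (Q1 Q)), path (@arrel Q) a s -> hd (last a s) != tl a.

Definition quiver_aut (Q : quiver) (s0 : {perm Q0 Q}) (s1 : {perm Q1 Q}) : Prop :=
  forall a : Q1 Q, @tl Q (s1 a) = s0 (@tl Q a) /\ @hd Q (s1 a) = s0 (@hd Q a).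

Section Hall.
Variables (Q : quiver) (s0 : {perm Q0 Q}) (s1 : {perm Q1 Q}).
Variables (k L : finFieldType) (emb : {rmorphism k -> L}).

(* I = porbits s0 (orbits of vertices), Gamma_1 = porbits s1 ;
   vectors in ZI / NI are functions {set Q0} -> nat read on I. *)
Definition Iset := porbits s0.
Definition Gam1 := porbits s1.
Definition torb (r : {set Q1 Q}) : {set Q0 Q} := (@tl Q) @: r.
Definition horb (r : {set Q1 Q}) : {set Q0 Q} := (@hd Q) @: r.

Definition euler (x y : {set Q0 Q} -> nat) : int :=
  \sum_(i in Iset) (#|i| * x i * y i)%:Z
  - \sum_(r in Gam1) (#|r| * x (torb r) * y (horb r))%:Z.
Definition symeuler (x y : {set Q0 Q} -> nat) : int := euler x y + euler y x.
Definition unitv (i : {set Q0 Q}) : {set Q0 Q} -> nat := fun j => (j == i : nat).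

Definition supp (mu : {set Q0 Q} -> nat) : {set {set Q0 Q}} :=
  [set i in Iset | mu i != 0%N].
Definition Gadj (S : {set {set Q0 Q}}) : rel {set Q0 Q} := fun i j =>
  [&& i \in S, j \in S &
   [exists r in Gam1, ((torb r == i) && (horb r == j)) || ((torb r == j) && (horb r == i))]].
Definition in_fundamental (mu : {set Q0 Q} -> nat) : Prop :=
  (forall i j, i \in supp mu -> j \in supp mu -> connect (Gadj (supp mu)) i j) /\
  (forall i, i \in Iset -> symeuler mu (unitv i) <= 0).

(* a path is (start vertex, arrows in order of traversal); allpaths lists all
   paths with < #|Q0|+1 arrows, which contains all paths when Q is acyclic *)
Definition seqs_of_len (l : nat) : seq (seq (Q1 Q)) := [seq val t | t : l.-tuple (Q1 Q)].
Definition allpaths : seq (Q0 Q * seq (Q1 Q)) :=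
  [seq (v, [::]) | v <- enum (Q0 Q)] ++
  [seq (@tl Q a, a :: s) | a <- enum (Q1 Q),
     s <- filter (path (@arrel Q) a) (flatten [seq seqs_of_len l | l <- iota 0 #|Q0 Q|])].
Definition Path := seq_sub allpaths.
Definition pstart (p : Path) : Q0 Q := (val p).1.
Definition pend (p : Path) : Q0 Q := last (val p).1 (map (@hd Q) (val p).2).

Definition PA := {ffun Path -> L}.
Definition addPA (f g : PA) : PA := [ffun p => f p + g p].
(* product: p * q = "q then p" (composition), defined when pend q = pstart p *)
Definition mulPA (f g : PA) : PA := [ffun r : Path =>
  \sum_(p : Path) \sum_(q : Path | (pend q == pstart p) &&
        ((pstart q, (val q).2 ++ (val p).2) == val r)) f p * g q].
Definition onePA : PA := [ffun p : Path => ((val p).2 == [::])%:R].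
Definition scalePA (c : k) (f : PA) : PA := [ffun p => emb c * f p].
Definition spath (x : Q0 Q * seq (Q1 Q)) : Q0 Q * seq (Q1 Q) := (s0 x.1, map s1 x.2).
Definition Frob (f : PA) : PA :=
  [ffun p : Path => \sum_(p' : Path | spath (val p') == val p) (f p') ^+ #|k|].
Definition Aalg : pred PA := fun f => Frob f == f.
Definition evec (i : {set Q0 Q}) : PA :=
  [ffun p : Path => (((val p).2 == [::]) && ((val p).1 \in i))%:R].

(* an A-module with underlying space k^m (column vectors), a . v = r a *m v;
   r is set to 0 outside A *)
Definition is_modb (m : nat) (r : {ffun PA -> 'M[k]_m}) : bool :=
  [&& r onePA == 1%:M,
      [forall f, (f \notin Aalg) ==> (r f == 0)],
      [forall f, [forall g, ((f \in Aalg) && (g \in Aalg)) ==>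
         ((r (addPA f g) == r f + r g) && (r (mulPA f g) == r f *m r g))]] &
      [forall c, [forall f, (f \in Aalg) ==> (r (scalePA c f) == c *: r f)]]].
Definition Mod (m : nat) := {r : {ffun PA -> 'M[k]_m} | is_modb r}.

Definition hom m n (M : Mod m) (N : Mod n) (f : 'M[k]_(n, m)) : bool :=
  [forall a, f *m val M a == val N a *m f].
Definition injb m n (f : 'M[k]_(n, m)) : bool :=
  [forall v : 'cV[k]_m, (f *m v == 0) ==> (v == 0)].
Definition surjb m n (f : 'M[k]_(n, m)) : bool :=
  [forall w : 'cV[k]_n, [exists v : 'cV[k]_m, f *m v == w]].
Definition isob m n (M : Mod m) (N : Mod n) : bool :=
  [exists f : 'M[k]_(n, m), [&& hom M N f, injb f & surjb f]].
Definition aut m (M : Mod m) : nat :=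
  #|[set f : 'M[k]_m | [&& hom M M f, injb f & surjb f]]|.
(* F^M_{X,Y} = #{ submodules Z of M | Z ~ Y, M/Z ~ X } *)
Definition hallnum l m1 m2 (M : Mod l) (X : Mod m1) (Y : Mod m2) : nat :=
  #|[set Z : {set 'cV[k]_l} |
      [exists f : 'M[k]_(l, m2), [&& hom Y M f, injb f & Z == [set f *m v | v : 'cV[k]_m2]]] &&
      [exists g : 'M[k]_(m1, l), [&& hom M X g, surjb g & Z == [set v | g *m v == 0]]]]|.

(* dimension vector: (dim M)_i = dim_{F_{q^eps_i}} e_i M = dim_{F_q}(e_i M) / eps_i *)
Definition dimv m (M : Mod m) : {set Q0 Q} -> nat :=
  fun i => (\rank (val M (evec i)) %/ #|i|)%N.
Definition has_dimv m (M : Mod m) (d : {set Q0 Q} -> nat) : Prop :=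
  forall i, i \in Iset -> dimv M i = d i.
Definition has_dimvb m (M : Mod m) (d : {set Q0 Q} -> nat) : bool :=
  [forall i in Iset, dimv M i == d i].
Definition totdim (d : {set Q0 Q} -> nat) : nat := (\sum_(i in Iset) #|i| * d i)%N.

Variable C : numClosedFieldType.

Definition classes m : {set {set Mod m}} := [set [set N | isob M N] | M : Mod m].
Definition sum_cls m (F : Mod m -> C) : C :=
  \sum_(Cl in classes m) (if [pick M in Cl] is Some M then F M else 0).

Definition vpar : C := sqrtC (#|k|%:R).

(* An element x of H_v(Q,sigma) is recorded by its coefficients: x M = coefficient
   of [M]; it is an isomorphism-invariant function. *)
Definition hall_elem (x : forall m, Mod m -> C) : Prop :=
  forall m n (M : Mod m) (N : Mod n), isob M N -> x m M = x n N.
Definition homogeneous (x : forall m, Mod m -> C) (d : {set Q0 Q} -> nat) : Prop :=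
  hall_elem x /\ forall m (M : Mod m), x m M != 0 -> has_dimv M d.

Definition coprod_coef (x : forall m, Mod m -> C) m1 m2 (X : Mod m1) (Y : Mod m2) : C :=
  sum_cls (fun M : Mod (m1 + m2) =>
    x _ M * vpar ^ (euler (dimv X) (dimv Y)) * (aut X)%:R * (aut Y)%:R / (aut M)%:R
      * (hallnum M X Y)%:R).

(* Delta(x) = x (x) 1 + 1 (x) x, where 1 = [0] is the class of the zero module *)
Definition primitive (x : forall m, Mod m -> C) : Prop :=
  forall m1 m2 (X : Mod m1) (Y : Mod m2),
    coprod_coef x X Y = (if m2 == 0%N then x m1 X else 0) + (if m1 == 0%N then x m2 Y else 0).

Definition Iform (x : forall m, Mod m -> C) (d : {set Q0 Q} -> nat) : C :=
  sum_cls (fun M : Mod (totdim d) => if has_dimvb M d then x _ M / (aut M)%:R else 0).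

End Hall.

(* Because Q is acyclic, some sigma-orbit i in the support of alpha is a sink of
   the support: a path starting in i and ending in the support ends in i.  No arrow
   joins a vertex orbit to itself, so (alpha, i) = 2 eps_i alpha_i > 0 if alpha were
   concentrated on i; hence alpha in F forces alpha = beta + alpha_i i with beta <> 0.
   For M of dimension alpha, e_i M is then a submodule, so for Y with e_i Y = Y we get
   F^M_{X,Y} = [Y ~ e_i M] [X ~ M / e_i M], and the F^M_{X,Y} with e_i Y = Y add up to 1.
   Thus I_alpha(x) = sum_{X,Y} sum_M x_M F^M_{X,Y} / a_M, and each inner sum is a
   nonzero multiple of the coefficient of [X] (x) [Y] in Delta(x), which vanishes since
   x is primitive and X, Y are nonzero.  For alpha = 0, primitivity at [0] (x) [0]
   reads x_0 = 2 x_0. *)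

From Pilot Require Import Defs.
From HB Require Import structures.
From mathcomp Require Import all_boot all_order fingroup perm all_algebra.
Set Implicit Arguments. Unset Strict Implicit. Unset Printing Implicit Defensive.
Import Order.TTheory GRing.Theory Num.Theory.

Section AcyclicQuiverAutomorphism.
Variables (Q : quiver) (s0 : {perm Q0 Q}) (s1 : {perm Q1 Q}).
Hypothesis autQ : quiver_aut s0 s1.
Hypothesis acycQ : acyclic Q.

Definition arrow_rel : rel (Q0 Q) := fun v u => [exists a, (tl a == v) && (hd a == u)].

Definition reach (v : Q0 Q) : {set Q0 Q} := [set u | connect arrow_rel v u].

Lemma arrow_relP a : arrow_rel (tl a) (hd a).
Proof. by apply/existsP; exists a; rewrite !eqxx. Qed.

Lemma tl_autX n a : tl ((s1 ^+ n)%g a) = (s0 ^+ n)%g (tl a).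
Proof.
elim: n => [|n IH]; first by rewrite !expg0 !perm1.
by rewrite !expgSr !permM (proj1 (autQ _)) IH.
Qed.

Lemma hd_autX n a : hd ((s1 ^+ n)%g a) = (s0 ^+ n)%g (hd a).
Proof.
elim: n => [|n IH]; first by rewrite !expg0 !perm1.
by rewrite !expgSr !permM (proj2 (autQ _)) IH.
Qed.

Lemma connect_autX n v u :
  connect arrow_rel v u -> connect arrow_rel ((s0 ^+ n)%g v) ((s0 ^+ n)%g u).
Proof.
move/connectP=> [p + ->] {u}; elim: p v => [|w p IH] v /=; first by rewrite connect0.
case/andP=> /existsP[a /andP[/eqP <- /eqP <-]] /IH; apply: connect_trans.
by rewrite -tl_autX -hd_autX connect1 ?arrow_relP.
Qed.

Lemma arrel_path_connect a s :
  path (@arrel Q) a s -> connect arrow_rel (hd a) (hd (last a s)).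
Proof.
elim: s a => [|b s IH] a /=; first by rewrite connect0.
case/andP=> /eqP ab /IH; apply: connect_trans.
by rewrite ab connect1 ?arrow_relP.
Qed.

Lemma connect_arrel_path a u :
  connect arrow_rel (hd a) u -> exists2 s, path (@arrel Q) a s & hd (last a s) = u.
Proof.
move/connectP=> [p + ->] {u}; elim: p a => [|w p IH] a /=; first by exists [::].
case/andP=> /existsP[b /andP[/eqP tb /eqP <-]] /IH[s bs <-].
by exists (b :: s); rewrite //= /arrel tb eqxx.
Qed.

Lemma reach_hd_proper a : reach (hd a) \proper reach (tl a).
Proof.
apply/properP; split.
  by apply/subsetP=> u; rewrite !inE; apply/connect_trans/connect1/arrow_relP.
exists (tl a); rewrite !inE ?connect0 //.
by apply/negP=> /connect_arrel_path[s /acycQ/eqP].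
Qed.

Lemma leq_card_reach_autX n v : #|reach v| <= #|reach ((s0 ^+ n)%g v)|.
Proof.
rewrite -(card_imset _ (@perm_inj _ (s0 ^+ n)%g)); apply/subset_leq_card/subsetP.
by move=> x /imsetP[u]; rewrite inE => /(connect_autX n) vu ->; rewrite inE.
Qed.

Lemma card_reach_porbit u v : porbit s0 u = porbit s0 v -> #|reach u| = #|reach v|.
Proof.
have le u' v' : porbit s0 u' = porbit s0 v' -> #|reach v'| <= #|reach u'|.
  by move/eqP; rewrite eq_porbit_mem => /porbitP[n ->]; apply: leq_card_reach_autX.
by move=> uv; apply/eqP; rewrite eqn_leq le // le.
Qed.

Lemma porbit_hd_tl_neq a : porbit s0 (hd a) != porbit s0 (tl a).
Proof.
apply/eqP=> /card_reach_porbit ht.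
by have := proper_card (reach_hd_proper a); rewrite ht ltnn.
Qed.

Lemma torb_porbit a : torb (porbit s1 a) = porbit s0 (tl a).
Proof.
apply/setP=> u; apply/imsetP/porbitP => [[b /porbitP[n ->] ->]|[n ->]].
  by exists n; rewrite tl_autX.
by exists ((s1 ^+ n)%g a); rewrite ?mem_porbit ?tl_autX.
Qed.

Lemma horb_porbit a : horb (porbit s1 a) = porbit s0 (hd a).
Proof.
apply/setP=> u; apply/imsetP/porbitP => [[b /porbitP[n ->] ->]|[n ->]].
  by exists n; rewrite hd_autX.
by exists ((s1 ^+ n)%g a); rewrite ?mem_porbit ?hd_autX.
Qed.

Lemma allpathsP p : p \in allpaths Q ->
  p.2 = [::] \/ exists a s, p = (tl a, a :: s) /\ path (@arrel Q) a s.
Proof.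
rewrite mem_cat => /orP[/mapP[v _ ->]|]; first by left.
move/allpairsPdep=> [a [s [_ + ->]]]; rewrite mem_filter => /andP[a_s _].
by right; exists a, s.
Qed.

Lemma pend_trivial (r : Path Q) : (val r).2 = [::] -> pend r = pstart r.
Proof. by rewrite /pend /pstart => ->. Qed.

Lemma reach_pend_proper (r : Path Q) :
  (val r).2 != [::] -> reach (pend r) \proper reach (pstart r).
Proof.
rewrite /pend /pstart; case: (allpathsP (valP r)) => [->//|[a [s [-> a_s]]]] _ /=.
apply: sub_proper_trans (reach_hd_proper a); apply/subsetP=> u; rewrite !inE /= last_map.
exact/connect_trans/arrel_path_connect.
Qed.

Lemma exists_sink_porbit (J : {set {set Q0 Q}}) v0 : porbit s0 v0 \in J ->
  exists2 w, porbit s0 w \in J & forall r : Path Q,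
    porbit s0 (pstart r) = porbit s0 w -> porbit s0 (pend r) \in J ->
    porbit s0 (pend r) = porbit s0 w.
Proof.
move=> Jv0; pose inJ v := porbit s0 v \in J.
have [w Jw wmin] := @arg_minnP _ v0 inJ (fun v => #|reach v|) Jv0.
exists w => // r rw Jr; have [/pend_trivial -> //|r_nt] := eqVneq (val r).2 [::].
have := proper_card (reach_pend_proper r_nt).
by rewrite (card_reach_porbit rw) ltnNge wmin.
Qed.

End AcyclicQuiverAutomorphism.

Local Open Scope ring_scope.

Section DimensionVectors.
Variables (Q : quiver) (s0 : {perm Q0 Q}) (s1 : {perm Q1 Q}).
Hypothesis autQ : quiver_aut s0 s1.
Hypothesis acycQ : acyclic Q.

Lemma porbit_Iset v : porbit s0 v \in Iset s0.
Proof. exact: imset_f. Qed.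

Lemma card_Iset_gt0 i : i \in Iset s0 -> (0 < #|i|)%N.
Proof. by case/imsetP=> v _ ->; rewrite lt0n card_porbit_neq0. Qed.

Lemma euler_single_porbit (x y : {set Q0 Q} -> nat) i : i \in Iset s0 ->
  (forall j, j \in Iset s0 -> j != i -> x j = 0%N) ->
  (forall j, j \in Iset s0 -> j != i -> y j = 0%N) ->
  euler s0 s1 x y = (#|i| * x i * y i)%N%:Z.
Proof.
move=> iI x0 y0; rewrite /euler (big_setD1 i iI) /= big1 ?addr0 => [|j /setD1P[ji jI]].
  rewrite big1 ?subr0 // => _ /imsetP[a _ ->]; rewrite (torb_porbit autQ) (horb_porbit autQ).
  have [ti|ti] := eqVneq (porbit s0 (tl a)) i; last by rewrite x0 ?porbit_Iset ?muln0.
  by rewrite y0 ?porbit_Iset ?muln0 // -ti (porbit_hd_tl_neq autQ acycQ).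
by rewrite x0 ?mul0n ?muln0.
Qed.

Variable alpha : {set Q0 Q} -> nat.

Lemma symeuler_single_support_gt0 i : i \in supp s0 alpha ->
  (forall j, j \in supp s0 alpha -> j = i) -> 0 < symeuler s0 s1 alpha (unitv i).
Proof.
rewrite inE => /andP[iI ai] only_i.
have alpha0 j : j \in Iset s0 -> j != i -> alpha j = 0%N.
  by move=> jI; apply: contraNeq => aj; rewrite (only_i j) // inE jI.
have unitv0 j : j \in Iset s0 -> j != i -> unitv i j = 0%N.
  by move=> _ /negbTE; rewrite /unitv => ->.
rewrite /symeuler !(euler_single_porbit iI) // /unitv eqxx -PoszD ltz_nat.
by rewrite /= !muln1 addn_gt0 muln_gt0 card_Iset_gt0 // lt0n ai.
Qed.

Lemma fundamental_support_not_single i :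
  (forall j, j \in Iset s0 -> symeuler s0 s1 alpha (unitv j) <= 0) ->
  i \in supp s0 alpha -> exists2 j, j \in supp s0 alpha & j != i.
Proof.
move=> fund iS; have iI : i \in Iset s0 by move: iS; rewrite inE => /andP[].
have [/existsP[j /andP[jS ji]]|] := boolP [exists j, (j \in supp s0 alpha) && (j != i)].
  by exists j.
rewrite negb_exists => /forallP only_i; have := fund i iI; rewrite leNgt.
rewrite symeuler_single_support_gt0 // => j jS.
by apply/eqP; have := only_i j; rewrite jS negbK.
Qed.

Lemma totdim_gt0_support : (0 < totdim s0 alpha)%N -> exists v, porbit s0 v \in supp s0 alpha.
Proof.
rewrite lt0n sum_nat_eq0 negb_forall => /existsP[j]; rewrite negb_imply muln_eq0.
case/andP=> /[dup] /imsetP[v _ ->] vI /norP[_ av]; by exists v; rewrite inE vI.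
Qed.

Lemma totdim_split i j : i \in supp s0 alpha -> j \in supp s0 alpha -> j != i ->
  exists2 m1, totdim s0 alpha = (m1 + #|i| * alpha i)%N & (0 < m1)%N /\ (0 < #|i| * alpha i)%N.
Proof.
rewrite !inE => /andP[iI ai] /andP[jI aj] ji.
exists (\sum_(l in Iset s0 :\ i) #|l| * alpha l)%N.
  by rewrite /totdim (big_setD1 i) //= addnC.
rewrite (big_setD1 j) ?inE ?ji //= addn_gt0 !muln_gt0 !card_Iset_gt0 //.
by rewrite !lt0n ai aj.
Qed.

End DimensionVectors.

Section PathAlgebraIdempotents.
Variables (Q : quiver) (s0 : {perm Q0 Q}) (s1 : {perm Q1 Q}).
Hypothesis autQ : quiver_aut s0 s1.
Variables (k L : finFieldType).
Local Notation A := (@Aalg Q s0 s1 k L).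

Definition eorbits (J : {set {set Q0 Q}}) : PA Q L :=
  [ffun p => (((val p).2 == [::]) && (porbit s0 (pstart p) \in J))%:R].
Definition restr_start (a : PA Q L) (J : {set {set Q0 Q}}) : PA Q L :=
  [ffun p => a p * (porbit s0 (pstart p) \in J)%:R].
Definition restr_end (J : {set {set Q0 Q}}) (a : PA Q L) : PA Q L :=
  [ffun p => (porbit s0 (pend p) \in J)%:R * a p].

Lemma trivial_path_mem (v : Q0 Q) : (v, [::]) \in allpaths Q.
Proof. by rewrite mem_cat map_f ?mem_enum. Qed.

Definition trivial_path (v : Q0 Q) : Path Q := SeqSub (trivial_path_mem v).

Lemma trivial_pathE (p : Path Q) : (val p).2 = [::] -> p = trivial_path (pstart p).
Proof. by case: p => [[v s] ?] /= s_nil; apply: val_inj; rewrite /= [in LHS]s_nil. Qed.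

Lemma path_pairE (p : Path Q) : (pstart p, (val p).2) = val p.
Proof. by case: p => [[]]. Qed.

Lemma natr_andb (b c : bool) : (b%:R * c%:R : L) = (b && c)%:R.
Proof. by case: b; case: c; rewrite ?mulr1 ?mulr0. Qed.

Lemma natr_bool_expn (b : bool) : (b%:R : L) ^+ #|k| = b%:R.
Proof.
have k_gt0 : (0 < #|k|)%N by apply/card_gt0P; exists 0.
by case: b; rewrite ?expr1n // expr0n eqn0Ngt k_gt0.
Qed.

Lemma mulPA_eorbits_r a J : mulPA a (eorbits J) = restr_start a J.
Proof.
apply/ffunP=> r; rewrite !ffunE (bigD1 r) //= [X in _ + X]big1 ?addr0; last first.
  move=> p pr; apply: big1 => q /andP[/eqP qp /eqP qr]; rewrite ffunE.
  have [q0|] := eqVneq (val q).2 [::]; last by rewrite mulr0.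
  case/eqP: pr; apply/val_inj; move: qp qr; rewrite /pend /pstart q0 /=.
  by case: (val p) => v s /= -> <-.
rewrite (bigD1 (trivial_path (pstart r))) /=; last first.
  by rewrite /pend /pstart /=; case: (ssval r) => v s; rewrite !eqxx.
rewrite !ffunE /= big1 ?addr0 // => q /andP[/andP[/eqP qr /eqP rq] qt]; rewrite ffunE.
have [q0|] := eqVneq (val q).2 [::]; last by rewrite mulr0.
case/eqP: qt; rewrite (trivial_pathE q0); congr trivial_path.
by move: qr rq; rewrite /pend /pstart q0 /= => -> <-.
Qed.

Lemma mulPA_eorbits_l J a : mulPA (eorbits J) a = restr_end J a.
Proof.
apply/ffunP=> r; rewrite !ffunE (bigD1 (trivial_path (pend r))) //=.
rewrite [X in _ + X]big1 ?addr0; last first.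
  move=> p pr; apply: big1 => q /andP[/eqP qp /eqP qr]; rewrite ffunE.
  have [p0|] := eqVneq (val p).2 [::]; last by rewrite mul0r.
  have rq : r = q by apply/val_inj; rewrite /= -qr p0 cats0 path_pairE.
  by case/eqP: pr; rewrite (trivial_pathE p0) -qp rq.
rewrite (bigD1 r) /=; last by rewrite cats0 path_pairE !eqxx.
rewrite !ffunE /= big1 ?addr0 // => q /andP[/andP[_ /eqP qr] qt].
by case/eqP: qt; apply/val_inj; rewrite /= -qr cats0 path_pairE.
Qed.

Lemma pstart_spath (p p' : Path Q) :
  spath s0 s1 (val p') = val p -> pstart p = s0 (pstart p').
Proof. by rewrite /pstart => <-. Qed.

Lemma pend_spath (p p' : Path Q) :
  spath s0 s1 (val p') = val p -> pend p = s0 (pend p').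
Proof.
rewrite /pend => <- /=; rewrite -map_comp (eq_map (fun a => proj2 (autQ a))).
by rewrite map_comp last_map.
Qed.

Lemma restr_start_A a J : a \in A -> restr_start a J \in A.
Proof.
rewrite /in_mem /= /Aalg => /eqP aA; apply/eqP/ffunP=> p; rewrite !ffunE.
under eq_bigr => p' /eqP pp' do
  rewrite ffunE exprMn natr_bool_expn -(porbit_perm s0 1) expg1 -(pstart_spath pp').
by rewrite -big_distrl /= -{2}aA ffunE.
Qed.

Lemma restr_end_A a J : a \in A -> restr_end J a \in A.
Proof.
rewrite /in_mem /= /Aalg => /eqP aA; apply/eqP/ffunP=> p; rewrite !ffunE.
under eq_bigr => p' /eqP pp' do
  rewrite ffunE exprMn natr_bool_expn -(porbit_perm s0 1) expg1 -(pend_spath pp').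
by rewrite -big_distrr /= -{2}aA ffunE.
Qed.

Lemma eorbits_A J : onePA Q L \in A -> eorbits J \in A.
Proof.
move=> oneA; have -> : eorbits J = restr_start (onePA Q L) J.
  by apply/ffunP=> p; rewrite !ffunE natr_andb.
exact: restr_start_A.
Qed.

Lemma eorbits_mul J K : mulPA (eorbits J) (eorbits K) = eorbits (J :&: K).
Proof. by rewrite mulPA_eorbits_r; apply/ffunP=> p; rewrite !ffunE natr_andb inE andbA. Qed.

Lemma eorbits_add (J K : {set {set Q0 Q}}) :
  [disjoint J & K] -> addPA (eorbits J) (eorbits K) = eorbits (J :|: K).
Proof.
move=> JK; apply/ffunP=> p; rewrite !ffunE inE.
case: ((val p).2 == [::]) => /=; last by rewrite addr0.
have [pJ|pJ] := boolP (_ \in J); last by rewrite add0r.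
by rewrite (disjointFr JK pJ) addr0.
Qed.

Lemma eorbits_Iset : eorbits (Iset s0) = onePA Q L.
Proof. by apply/ffunP=> p; rewrite !ffunE porbit_Iset andbT. Qed.

Lemma evec_eorbits i : i \in Iset s0 -> evec L i = eorbits [set i].
Proof. by case/imsetP=> v _ ->; apply/ffunP=> p; rewrite !ffunE inE eq_porbit_mem. Qed.

End PathAlgebraIdempotents.

Lemma mxrank_add_orth_idem (F : fieldType) n (P R : 'M[F]_n) :
  P *m P = P -> R *m R = R -> P *m R = 0 -> R *m P = 0 ->
  \rank (P + R)%R = (\rank P + \rank R)%N.
Proof.
move=> PP RR PR RP; apply/eqP; rewrite eqn_leq mxrank_add.
have PRcap : (P :&: R)%MS = 0.
  set W := (P :&: R)%MS.
  have /submxP[D1 e1] : (W <= P)%MS by apply: capmxSl.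
  have /submxP[D2 e2] : (W <= R)%MS by apply: capmxSr.
  by rewrite e2 -[R]RR mulmxA -e2 e1 -mulmxA PR mulmx0.
rewrite -mxrank_disjoint_sum // mxrankS // addsmx_sub; apply/andP; split.
  by rewrite -{1}PP -[P *m P]addr0 -PR -mulmxDr submxMl.
by rewrite -{1}RR -[R *m R]add0r -RP -mulmxDr submxMl.
Qed.

Section ModuleIdempotents.
Variables (Q : quiver) (s0 : {perm Q0 Q}) (s1 : {perm Q1 Q}).
Hypothesis autQ : quiver_aut s0 s1.
Variables (k L : finFieldType) (emb : {rmorphism k -> L}).
Local Notation A := (@Aalg Q s0 s1 k L).
Variables (m : nat) (M : Mod s0 s1 emb m).

Lemma rep_one : val M (onePA Q L) = 1%:M.
Proof. by case/and4P: (valP M) => /eqP. Qed.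

Lemma rep_notA f : f \notin A -> val M f = 0.
Proof. by case/and4P: (valP M) => _ /forallP /(_ f) /implyP fA _ _ /fA /eqP. Qed.

Lemma rep_add f g : f \in A -> g \in A -> val M (addPA f g) = val M f + val M g.
Proof.
case/and4P: (valP M) => _ _ /forallP /(_ f) /forallP /(_ g) /implyP fgA _ fA gA.
by case/andP: (fgA (introT andP (conj fA gA))) => /eqP.
Qed.

Lemma rep_mul f g : f \in A -> g \in A -> val M (mulPA f g) = val M f *m val M g.
Proof.
case/and4P: (valP M) => _ _ /forallP /(_ f) /forallP /(_ g) /implyP fgA _ fA gA.
by case/andP: (fgA (introT andP (conj fA gA))) => _ /eqP.
Qed.

Lemma rep_scale c f : f \in A -> val M (scalePA emb c f) = c *: val M f.
Proof.
move=> fA; case/and4P: (valP M) => _ _ _ /forallP /(_ c) /forallP /(_ f) /implyP.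
by move=> /(_ fA) /eqP.
Qed.

Hypothesis m_gt0 : (0 < m)%N.

Lemma onePA_A : onePA Q L \in A.
Proof.
apply: contraT => /rep_notA; rewrite rep_one => /matrixP /(_ (Ordinal m_gt0) (Ordinal m_gt0)).
by rewrite !mxE eqxx => /eqP; rewrite oner_eq0.
Qed.

Definition eM J := val M (eorbits s0 L J).

Lemma eorbits_in_A J : eorbits s0 L J \in A.
Proof. exact/eorbits_A/onePA_A. Qed.

Lemma eM_mul J K : eM J *m eM K = eM (J :&: K).
Proof. by rewrite /eM -rep_mul ?eorbits_in_A // eorbits_mul. Qed.

Lemma eM_add (J K : {set {set Q0 Q}}) : [disjoint J & K] -> eM (J :|: K) = eM J + eM K.
Proof. by move=> JK; rewrite /eM -rep_add ?eorbits_in_A // eorbits_add. Qed.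

Lemma eM0 : eM set0 = 0.
Proof.
apply: (addrI (eM set0)); rewrite addr0 -eM_add ?setU0 //.
by rewrite disjoints_subset sub0set.
Qed.

Lemma eM_Iset : eM (Iset s0) = 1%:M.
Proof. by rewrite /eM eorbits_Iset rep_one. Qed.

Lemma rank_eM J : \rank (eM J) = (\sum_(j in J) \rank (eM [set j]))%N.
Proof.
elim: {J}_.+1 {-2}J (ltnSn #|J|) => // n IH J; rewrite ltnS.
have [->|[j jJ]] := set_0Vmem J; first by rewrite big_set0 eM0 mxrank0.
rewrite (cardsD1 j) jJ (big_setD1 j) //= => /IH <-.
have jJj : [set j] :&: (J :\ j) = set0 by apply/setP=> x; rewrite !inE; case: eqP.
rewrite -{1}(setD1K jJ) eM_add ?disjoints1 ?setD11 // mxrank_add_orth_idem ?eM_mul ?setIid //.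
  by rewrite jJj eM0.
by rewrite setIC jJj eM0.
Qed.

Variable alpha : {set Q0 Q} -> nat.
Hypothesis M_dim : has_dimv M alpha.
Hypothesis m_totdim : m = totdim s0 alpha.

Lemma rank_eM_porbit j : j \in Iset s0 -> \rank (eM [set j]) = (#|j| * alpha j)%N.
Proof.
(* [dimv] rounds down, so each rank dominates #|j| * alpha j; the totals agree. *)
have le_rank l : l \in Iset s0 -> (#|l| * alpha l <= \rank (eM [set l]))%N.
  by move=> lI; rewrite -(M_dim lI) mulnC /eM -evec_eorbits // leq_divM.
have := leqif_sum (fun l lI => leqif_eq (le_rank l lI)).
rewrite -rank_eM eM_Iset mxrank1 -[\sum_(l in _) _]/(totdim s0 alpha) -m_totdim.
case=> _; rewrite eqxx => /esym /forall_inP eq_rank jI.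
by apply/esym/eqP; apply: eq_rank.
Qed.

Lemma eM_off_support : eM (Iset s0 :\: supp s0 alpha) = 0.
Proof.
apply/eqP; rewrite -mxrank_eq0 rank_eM; apply/eqP/big1 => j.
rewrite !inE => /andP[+ jI]; rewrite jI negbK => /eqP aj.
by rewrite rank_eM_porbit // aj muln0.
Qed.

Variable i : {set Q0 Q}.
Hypothesis i_supp : i \in supp s0 alpha.
Hypothesis i_sink : forall r : Path Q, porbit s0 (pstart r) = i ->
  porbit s0 (pend r) \in supp s0 alpha -> porbit s0 (pend r) = i.

Lemma eM_sink_stable f : val M f *m eM [set i] = eM [set i] *m val M f *m eM [set i].
Proof.
(* The paths of f starting in i end in i or outside the support, where M vanishes. *)
have [fA|/rep_notA ->] := boolP (f \in A); last by rewrite mul0mx mulmx0 mul0mx.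
set b := restr_start s0 f [set i].
have bA : b \in A by apply: restr_start_A.
have fe : val M f *m eM [set i] = val M b.
  by rewrite /eM -rep_mul ?eorbits_in_A // mulPA_eorbits_r.
have b_split : b = addPA (restr_end s0 [set i] b) (restr_end s0 (Iset s0 :\: supp s0 alpha) b).
  apply/ffunP=> p; rewrite /b !ffunE !in_set1 in_setD porbit_Iset andbT.
  have [pi|] := eqVneq (porbit s0 (pstart p)) i; last by rewrite !mulr0 addr0.
  have [->|ni] := eqVneq (porbit s0 (pend p)) i; first by rewrite i_supp /= mul1r mul0r addr0.
  have [/(i_sink pi) pe|_] := boolP (porbit s0 (pend p) \in supp s0 alpha).
    by rewrite pe eqxx in ni.
  by rewrite /= mul0r add0r mul1r.
have eb : val M b = eM [set i] *m val M b.
  rewrite {1}b_split rep_add ?restr_end_A // -!mulPA_eorbits_l !rep_mul ?eorbits_in_A //.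
  by rewrite -[val M (eorbits s0 L (_ :\: _))]/(eM _) eM_off_support mul0mx addr0.
by rewrite fe -mulmxA fe -eb.
Qed.

End ModuleIdempotents.

Lemma idem_factor (F : fieldType) n r (E : 'M[F]_n) : E *m E = E -> \rank E = r ->
  exists U : 'M_(n, r), exists2 V : 'M_(r, n), U *m V = E & V *m U = 1%:M.
Proof.
move=> EE <-; have [Ul UlU] := row_fullP (col_base_full E).
have [Vr VVr] := row_freeP (row_base_free E).
move: (mulmx_base E) UlU VVr; move: (col_base E) (row_base E) => U V UV UlU VVr.
exists U, V => //.
have : Ul *m (U *m V *m (U *m V)) *m Vr = Ul *m (U *m V) *m Vr by rewrite UV EE.
by rewrite !mulmxA UlU mul1mx -!mulmxA VVr !mulmx1.
Qed.

Section ModuleMorphisms.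
Variables (Q : quiver) (s0 : {perm Q0 Q}) (s1 : {perm Q1 Q}).
Variables (k L : finFieldType) (emb : {rmorphism k -> L}).
Local Notation Mod := (Mod s0 s1 emb).

Lemma homP m n (M : Mod m) (N : Mod n) (f : 'M[k]_(n, m)) :
  reflect (forall a, f *m val M a = val N a *m f) (Defs.hom M N f).
Proof. by apply: (iffP forallP) => fMN a; apply/eqP. Qed.

Lemma injbP m n (f : 'M[k]_(n, m)) :
  reflect (forall v : 'cV[k]_m, f *m v = 0 -> v = 0) (injb f).
Proof.
apply: (iffP forallP) => finj v; last by apply/implyP=> /eqP /finj ->.
by move=> fv; apply/eqP/(implyP (finj v)); rewrite fv.
Qed.

Lemma surjbP m n (f : 'M[k]_(n, m)) :
  reflect (forall w : 'cV[k]_n, exists v : 'cV[k]_m, f *m v = w) (surjb f).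
Proof.
apply: (iffP forallP) => fsurj w; first by have /existsP[v /eqP] := fsurj w; exists v.
by have [v fv] := fsurj w; apply/existsP; exists v; rewrite fv.
Qed.

Lemma injb_rank m n (f : 'M[k]_(n, m)) : injb f -> \rank f = m.
Proof.
move/injbP=> finj; rewrite -mxrank_tr; apply/eqP/inj_row_free => v vf.
apply/trmx_inj; rewrite trmx0; apply/finj/trmx_inj.
by rewrite trmx_mul trmxK vf trmx0.
Qed.

Lemma injb_unitmx n (f : 'M[k]_n) : injb f -> f \in unitmx.
Proof. by move=> finj; rewrite -row_free_unit /row_free injb_rank. Qed.

Lemma isobP m n (M : Mod m) (N : Mod n) : reflect
  (exists f : 'M[k]_(n, m), [/\ forall a, f *m val M a = val N a *m f,
     forall v : 'cV_m, f *m v = 0 -> v = 0 & forall w : 'cV_n, exists v, f *m v = w])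
  (isob M N).
Proof.
apply: (iffP existsP) => [[f /and3P[/homP ? /injbP ? /surjbP ?]]|[f [? ? ?]]].
  by exists f.
by exists f; apply/and3P; split; [apply/homP | apply/injbP | apply/surjbP].
Qed.

Lemma hom_unitmx_isob n (M N : Mod n) (f : 'M[k]_n) :
  Defs.hom M N f -> f \in unitmx -> isob M N.
Proof.
move=> /homP fhom fU; apply/isobP; exists f; split=> [//|v fv|w].
  by rewrite -(mulKmx fU v) fv mulmx0.
by exists (invmx f *m w); rewrite mulKVmx.
Qed.

Lemma isob_refl m (M : Mod m) : isob M M.
Proof.
apply: (hom_unitmx_isob (f := 1%:M)); last exact: unitmx1.
by apply/homP=> a; rewrite mul1mx mulmx1.
Qed.

Lemma isob_trans m n p (M : Mod m) (N : Mod n) (R : Mod p) :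
  isob M N -> isob N R -> isob M R.
Proof.
move=> /isobP[f [fhom finj fsurj]] /isobP[g [ghom ginj gsurj]].
apply/isobP; exists (g *m f); split=> [a|v|w].
- by rewrite -mulmxA fhom !mulmxA ghom.
- by rewrite -mulmxA => /ginj /finj.
- by have [u <-] := gsurj w; have [v <-] := fsurj u; exists v; rewrite mulmxA.
Qed.

Lemma isob_sym n (M N : Mod n) : isob M N -> isob N M.
Proof.
move=> /isobP[f [fhom finj _]].
have fU : f \in unitmx by apply/injb_unitmx/injbP.
apply: (hom_unitmx_isob (f := invmx f)); last by rewrite unitmx_inv.
apply/homP=> a.
by apply: (canLR (mulKmx fU)); rewrite mulmxA fhom mulmxK.
Qed.

Lemma isobC n (M N : Mod n) : isob M N = isob N M.
Proof. by apply/idP/idP; apply: isob_sym. Qed.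

Lemma isob_rep_id n (M N : Mod n) (e : PA Q L) :
  isob M N -> val M e = 1%:M -> val N e = 1%:M.
Proof.
move=> /isobP[f [fhom finj _]] Me.
have fU : f \in unitmx by apply/injb_unitmx/injbP.
by have := fhom e; rewrite Me mulmx1 => fNe; rewrite -[val N e](mulmxK fU) -fNe mulmxV.
Qed.

End ModuleMorphisms.

Section SubQuotient.
Variables (Q : quiver) (s0 : {perm Q0 Q}) (s1 : {perm Q1 Q}).
Variables (k L : finFieldType) (emb : {rmorphism k -> L}).
Local Notation Mod := (Mod s0 s1 emb).

Definition colspan m n (A : 'M[k]_(m, n)) : {set 'cV[k]_m} := [set A *m v | v : 'cV_n].
Definition kerset m n (A : 'M[k]_(m, n)) : {set 'cV[k]_n} := [set v | A *m v == 0].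

Lemma hallnumE l m1 m2 (M : Mod l) (X : Mod m1) (Y : Mod m2) :
  hallnum M X Y =
  #|[set Z : {set 'cV[k]_l} | [exists f, [&& Defs.hom Y M f, injb f & Z == colspan f]] &&
                              [exists g, [&& Defs.hom M X g, surjb g & Z == kerset g]]]|.
Proof. by []. Qed.

Lemma colspan_eq m p q (A : 'M[k]_(m, p)) (B : 'M[k]_(m, q)) X Y :
  A = B *m X -> B = A *m Y -> colspan A = colspan B.
Proof.
move=> AB BA; apply/setP=> z; apply/imsetP/imsetP => [[v _ ->]|[v _ ->]].
  by exists (X *m v); rewrite // AB mulmxA.
by exists (Y *m v); rewrite // BA mulmxA.
Qed.

Lemma mx_eq0 m n (A : 'M[k]_(m, n)) : (forall v : 'cV_n, A *m v = 0) -> A = 0.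
Proof.
move=> A0; apply/matrixP=> a b; have := A0 (delta_mx b 0); rewrite -colE.
by move/matrixP/(_ a 0); rewrite !mxE.
Qed.

Definition compress_rep m r (M : Mod m) (V : 'M[k]_(r, m)) (U : 'M[k]_(m, r)) :
  {ffun PA Q L -> 'M[k]_r} := [ffun a => V *m val M a *m U].

Lemma compress_is_modb m r (M : Mod m) V U : V *m U = 1%:M ->
  (forall f g, V *m val M f *m val M g *m U = V *m val M f *m U *m (V *m val M g *m U)) ->
  is_modb s0 s1 emb (@compress_rep m r M V U).
Proof.
move=> VU VMU; apply/and4P; split.
- by rewrite ffunE rep_one mulmx1 VU.
- by apply/forallP=> f; apply/implyP=> fA; rewrite ffunE rep_notA // mulmx0 mul0mx.
- apply/forallP=> f; apply/forallP=> g; apply/implyP=> /andP[fA gA].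
  by rewrite !ffunE rep_add // rep_mul // mulmxDr mulmxDl mulmxA VMU !eqxx.
- apply/forallP=> c; apply/forallP=> f; apply/implyP=> fA.
  by rewrite !ffunE rep_scale // -scalemxAr -scalemxAl.
Qed.

Variables (m1 m2 : nat) (M : Mod (m1 + m2)) (e : PA Q L).
Let P := val M e.
Hypothesis P_idem : P *m P = P.
Hypothesis P_stable : forall f, val M f *m P = P *m val M f *m P.
Variables (U1 : 'M[k]_(m1 + m2, m2)) (V1 : 'M[k]_(m2, m1 + m2)).
Variables (U2 : 'M[k]_(m1 + m2, m1)) (V2 : 'M[k]_(m1, m1 + m2)).
Hypotheses (U1V1 : U1 *m V1 = P) (V1U1 : V1 *m U1 = 1%:M).
Hypotheses (U2V2 : U2 *m V2 = 1%:M - P) (V2U2 : V2 *m U2 = 1%:M).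

Lemma P_U1 : P *m U1 = U1.
Proof. by rewrite -U1V1 -mulmxA V1U1 mulmx1. Qed.

Lemma V2_P : V2 *m P = 0.
Proof.
have -> : V2 = V2 *m (1%:M - P) by rewrite -U2V2 mulmxA V2U2 mul1mx.
by rewrite -mulmxA mulmxBl mul1mx P_idem subrr mulmx0.
Qed.

Lemma rep_U1 f : val M f *m U1 = U1 *m (V1 *m val M f *m U1).
Proof. by rewrite !mulmxA U1V1 -{1}P_U1 mulmxA P_stable -mulmxA P_U1. Qed.

Lemma V2_rep f : V2 *m val M f = V2 *m val M f *m U2 *m V2.
Proof.
rewrite -mulmxA U2V2 mulmxBr mulmx1 -mulmxA P_stable !mulmxA V2_P.
by rewrite !mul0mx subr0.
Qed.

Lemma sub_mulr f g :
  V1 *m val M f *m val M g *m U1 = V1 *m val M f *m U1 *m (V1 *m val M g *m U1).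
Proof. by rewrite -[in LHS]mulmxA rep_U1 !mulmxA. Qed.

Lemma quot_mulr f g :
  V2 *m val M f *m val M g *m U2 = V2 *m val M f *m U2 *m (V2 *m val M g *m U2).
Proof. by rewrite [in LHS]V2_rep !mulmxA. Qed.

(* [submod] is the submodule P M and [quotmod] the quotient M / P M, written in the
   bases U1 of P M and U2 of (1 - P) M. *)
Definition submod : Mod m2 := exist _ (compress_rep M V1 U1) (compress_is_modb V1U1 sub_mulr).
Definition quotmod : Mod m1 := exist _ (compress_rep M V2 U2) (compress_is_modb V2U2 quot_mulr).

Lemma colspan_U1 : colspan U1 = colspan P.
Proof. by apply: (colspan_eq (X := U1) (Y := V1)); rewrite ?U1V1 ?P_U1. Qed.

Lemma kerset_V2 : kerset V2 = colspan P.
Proof.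
apply/setP=> v; rewrite inE; apply/eqP/imsetP => [V2v|[w _ ->]]; last first.
  by rewrite mulmxA V2_P mul0mx.
exists v => //; apply/eqP; rewrite -subr_eq0 -{1}[v]mul1mx -mulmxBl -U2V2.
by rewrite -mulmxA V2v mulmx0.
Qed.

Lemma submod_rep_id : val submod e = 1%:M.
Proof. by rewrite /= ffunE -/P -U1V1 !mulmxA V1U1 mul1mx V1U1. Qed.

Lemma hom_inj_colspan_isob (Y : Mod m2) f : val Y e = 1%:M ->
  Defs.hom Y M f -> injb f -> colspan f = colspan P /\ isob Y submod.
Proof.
move=> Ye /homP fhom /injbP finj.
have Pf : P *m f = f by have := fhom e; rewrite Ye mulmx1.
have f_U1 : f = U1 *m (V1 *m f) by rewrite mulmxA U1V1 Pf.
have gU : V1 *m f \in unitmx.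
  by apply/injb_unitmx/injbP=> v gv; apply: finj; rewrite f_U1 -mulmxA gv mulmx0.
split.
  rewrite -colspan_U1; apply: (colspan_eq f_U1 (Y := invmx (V1 *m f))).
  by rewrite {1}f_U1 mulmxK.
apply: (hom_unitmx_isob _ gU); apply/homP=> a.
by rewrite /= ffunE -mulmxA fhom {1}f_U1 !mulmxA.
Qed.

Lemma isob_sub_hom_inj (Y : Mod m2) : isob Y submod ->
  exists f, [&& Defs.hom Y M f, injb f & colspan P == colspan f].
Proof.
move=> /isobP[h [hhom hinj _]]; have hU : h \in unitmx by apply/injb_unitmx/injbP.
exists (U1 *m h); apply/and3P; split.
- by apply/homP=> a; rewrite -mulmxA hhom /= ffunE !mulmxA rep_U1 !mulmxA.
- apply/injbP=> v; rewrite -mulmxA => /(congr1 (mulmx V1)).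
  by rewrite mulmxA V1U1 mul1mx mulmx0 => /hinj.
- apply/eqP; rewrite -colspan_U1; apply: (colspan_eq (X := invmx h) (Y := h)) => //.
  by rewrite mulmxK.
Qed.

Lemma exists_embedding (Y : Mod m2) Z : val Y e = 1%:M ->
  [exists f, [&& Defs.hom Y M f, injb f & Z == colspan f]] = (Z == colspan P) && isob Y submod.
Proof.
move=> Ye; apply/existsP/andP => [[f /and3P[fhom finj /eqP ->]]|[/eqP -> /isob_sub_hom_inj]].
  by have [-> ->] := hom_inj_colspan_isob Ye fhom finj.
by move=> [f fP]; exists f.
Qed.

Lemma surj_ker_isob (X : Mod m1) g : Defs.hom M X g -> surjb g ->
  colspan P = kerset g -> isob quotmod X.
Proof.
move=> /homP ghom _ Pker.
have gP : g *m P = 0.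
  apply: mx_eq0 => v; have : P *m v \in kerset g by rewrite -Pker imset_f.
  by rewrite inE mulmxA => /eqP.
have g_V2 : g = g *m U2 *m V2 by rewrite -mulmxA U2V2 mulmxBr mulmx1 gP subr0.
apply: (hom_unitmx_isob (f := g *m U2)).
  by apply/homP=> a; rewrite /= ffunE !mulmxA -[g *m U2 *m V2]g_V2 ghom.
apply/injb_unitmx/injbP=> v gv.
have : U2 *m v \in kerset V2 by rewrite kerset_V2 Pker inE mulmxA gv.
by rewrite inE mulmxA V2U2 mul1mx => /eqP.
Qed.

Lemma isob_quot_hom_surj (X : Mod m1) : isob quotmod X ->
  exists g, [&& Defs.hom M X g, surjb g & colspan P == kerset g].
Proof.
move=> /isobP[h [hhom hinj _]]; have hU : h \in unitmx by apply/injb_unitmx/injbP.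
exists (h *m V2); apply/and3P; split.
- by apply/homP=> a; rewrite -mulmxA V2_rep !mulmxA -hhom /= ffunE !mulmxA.
- apply/surjbP=> w; exists (U2 *m (invmx h *m w)).
  by rewrite -mulmxA (mulmxA V2) V2U2 mul1mx mulKVmx.
- rewrite -kerset_V2; apply/eqP/setP=> v; rewrite !inE -mulmxA.
  by apply/eqP/eqP=> [->|/(congr1 (mulmx (invmx h)))]; rewrite ?mulmx0 ?mulKmx.
Qed.

Lemma exists_quotient (X : Mod m1) :
  [exists g, [&& Defs.hom M X g, surjb g & colspan P == kerset g]] = isob quotmod X.
Proof.
apply/existsP/idP => [[g /and3P[ghom gsurj /eqP]]|/isob_quot_hom_surj[g gP]].
  exact: surj_ker_isob.
by exists g.
Qed.

Lemma hallnum_subquot (X : Mod m1) (Y : Mod m2) : val Y e = 1%:M ->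
  hallnum M X Y = isob Y submod && isob quotmod X.
Proof.
move=> Ye; rewrite hallnumE (_ : finset _ =
  if isob Y submod && isob quotmod X then [set colspan P] else set0).
  by case: ifP; rewrite ?cards1 ?cards0.
apply/setP=> Z; rewrite inE (exists_embedding _ Ye).
have [-> /=|ZP] := eqVneq Z (colspan P); last by case: ifP; rewrite ?inE ?(negbTE ZP).
by rewrite exists_quotient; case: ifP; rewrite ?inE ?eqxx.
Qed.

End SubQuotient.

Lemma exists_subquot_hallnum (Q : quiver) (s0 : {perm Q0 Q}) (s1 : {perm Q1 Q})
    (k L : finFieldType) (emb : {rmorphism k -> L})
    m1 m2 (M : Mod s0 s1 emb (m1 + m2)) (e : PA Q L) :
  let P := val M e in P *m P = P -> (forall f, val M f *m P = P *m val M f *m P) ->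
  \rank P = m2 ->
  exists Y0 : Mod s0 s1 emb m2, exists X0 : Mod s0 s1 emb m1,
  forall (X : Mod s0 s1 emb m1) (Y : Mod s0 s1 emb m2),
    (if val Y e == 1%:M then hallnum M X Y else 0%N) = isob Y0 Y && isob X0 X.
Proof.
move=> P P_idem P_stable P_rank.
have [U1 [V1 U1V1 V1U1]] := idem_factor P_idem P_rank.
have Pc_idem : (1%:M - P) *m (1%:M - P) = 1%:M - P.
  by rewrite mulmxBl mul1mx mulmxBr mulmx1 P_idem subrr subr0.
have PPc : P *m (1%:M - P) = 0 by rewrite mulmxBr mulmx1 P_idem subrr.
have PcP : (1%:M - P) *m P = 0 by rewrite mulmxBl mul1mx P_idem subrr.
have Pc_rank : \rank (1%:M - P) = m1.
  have := mxrank_add_orth_idem P_idem Pc_idem PPc PcP.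
  rewrite addrC subrK mxrank1 P_rank => rk.
  by apply: (@addnI m2); rewrite -rk addnC.
have [U2 [V2 U2V2 V2U2]] := idem_factor Pc_idem Pc_rank.
exists (submod P_stable U1V1 V1U1), (quotmod P_idem P_stable U2V2 V2U2) => X Y.
have [Ye|Ye] := eqVneq (val Y e) 1%:M.
  by rewrite (hallnum_subquot P_idem P_stable U1V1 V1U1 U2V2 V2U2) // isobC.
suff -> : isob (submod P_stable U1V1 V1U1) Y = false by [].
by apply: contraNF Ye => /isob_rep_id Y0Y; apply/eqP/Y0Y/submod_rep_id.
Qed.

Section ClassSums.
Variables (Q : quiver) (s0 : {perm Q0 Q}) (s1 : {perm Q1 Q}).
Variables (k L : finFieldType) (emb : {rmorphism k -> L}) (C : numClosedFieldType).
Local Notation Mod := (Mod s0 s1 emb).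

Lemma eq_sum_cls n (F G : Mod n -> C) : (forall M, F M = G M) -> sum_cls F = sum_cls G.
Proof. by move=> FG; apply: eq_bigr => Cl _; case: pickP => // M _; rewrite FG. Qed.

Lemma sum_cls_eq0 n (F : Mod n -> C) : (forall M, F M = 0) -> sum_cls F = 0.
Proof. by move=> F0; apply: big1 => Cl _; case: pickP => // M _; rewrite F0. Qed.

Lemma mulr_sum_cls n c (F : Mod n -> C) : c * sum_cls F = sum_cls (fun M => c * F M).
Proof. by rewrite mulr_sumr; apply: eq_bigr => Cl _; case: pickP; rewrite ?mulr0. Qed.

Lemma exchange_sum_cls n p (F : Mod n -> Mod p -> C) :
  sum_cls (fun M => sum_cls (F M)) = sum_cls (fun N => sum_cls (F^~ N)).
Proof.
pose G (Cl : {set Mod n}) (Cl' : {set Mod p}) :=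
  if [pick M in Cl] is Some M then if [pick N in Cl'] is Some N then F M N else 0 else 0.
transitivity (\sum_(Cl in Defs.classes s0 s1 emb n)
  \sum_(Cl' in Defs.classes s0 s1 emb p) G Cl Cl').
  by apply: eq_bigr => Cl _; rewrite /G; case: pickP => [//|_]; rewrite big1.
rewrite exchange_big; apply: eq_bigr => Cl' _; rewrite /G.
case: pickP => [N _|_]; last by rewrite big1 // => Cl _; case: pickP.
by apply: eq_bigr => Cl _; case: pickP.
Qed.

Lemma sum_cls_isob n (N : Mod n) : sum_cls (fun M : Mod n => ((isob N M)%:R : C)) = 1.
Proof.
have clN : [set M | isob N M] \in Defs.classes s0 s1 emb n by apply: imset_f.
rewrite /sum_cls (bigD1 _ clN) /= big1 ?addr0.
  by case: pickP => [M|/(_ N)]; rewrite inE ?isob_refl // => ->.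
move=> _ /andP[/imsetP[N' _ ->] neq]; case: pickP => [M|//]; rewrite inE => N'M.
apply/eqP; rewrite pnatr_eq0 eqb0; apply: contra neq => NM.
apply/eqP/setP=> R; rewrite !inE; apply/idP/idP => [N'R|NR].
  exact: isob_trans NM (isob_trans (isob_sym N'M) N'R).
exact: isob_trans N'M (isob_trans (isob_sym NM) NR).
Qed.

Lemma sum_cls_partition_unity_eq0 n p q (c : Mod n -> C) (w : Mod n -> Mod p -> Mod q -> C) :
  (forall M, c M != 0 -> sum_cls (fun X => sum_cls (w M X)) = 1) ->
  (forall X Y, sum_cls (fun M => c M * w M X Y) = 0) -> sum_cls c = 0.
Proof.
move=> w1 cw0; transitivity (sum_cls (fun M => c M * sum_cls (fun X => sum_cls (w M X)))).
  by apply: eq_sum_cls => M; have [->|/w1 ->] := eqVneq (c M) 0; rewrite ?mul0r ?mulr1.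
under eq_sum_cls => M do rewrite mulr_sum_cls; under eq_sum_cls => M do
  under eq_sum_cls => X do rewrite mulr_sum_cls.
rewrite exchange_sum_cls; apply: sum_cls_eq0 => X.
by rewrite exchange_sum_cls; apply: sum_cls_eq0 => Y; apply: cw0.
Qed.

Lemma mod0_eq (M N : Mod 0) : M = N.
Proof. by apply/val_inj/ffunP=> a; apply/matrixP=> [[]]. Qed.

Lemma sum_cls_mod0 (M : Mod 0) (F : Mod 0 -> C) : sum_cls F = F M.
Proof.
rewrite /sum_cls (_ : Defs.classes s0 s1 emb 0 = [set [set N | isob M N]]).
  rewrite big_set1; case: pickP => [N _|/(_ M)]; first by rewrite (mod0_eq N M).
  by rewrite inE isob_refl.
apply/setP=> Cl; rewrite inE; apply/imsetP/eqP => [[M' _ ->]|->]; last by exists M.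
by rewrite (mod0_eq M' M).
Qed.

Lemma aut_gt0 n (M : Mod n) : (0 < aut M)%N.
Proof.
apply/card_gt0P; exists 1%:M; rewrite inE; apply/and3P; split.
- by apply/homP=> a; rewrite mul1mx mulmx1.
- by apply/injbP=> v; rewrite mul1mx.
- by apply/surjbP=> w; exists w; rewrite mul1mx.
Qed.

Lemma aut_mod0 (M : Mod 0) : aut M = 1%N.
Proof.
apply/eqP; rewrite eqn_leq aut_gt0 andbT; apply: (leq_trans (subset_leq_card (subsetT _))).
by rewrite cardsT card_mx muln0 expn0.
Qed.

Lemma hallnum_mod0 (M : Mod 0) : hallnum M M M = 1%N.
Proof.
have nonempty_setT (S : {set 'cV[k]_0}) v : v \in S -> S = setT.
  by move=> vS; apply/setP=> w; rewrite inE (_ : w = v) //; apply/matrixP=> [[]].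
have id_hom : Defs.hom M M 1%:M by apply/homP=> a; rewrite mul1mx mulmx1.
rewrite hallnumE (_ : finset _ = [set setT]) ?cards1 //; apply/setP=> Z; rewrite !inE.
apply/andP/eqP => [[/existsP[f /and3P[_ _ /eqP ->]] _]|->].
  by apply: (nonempty_setT _ (f *m 0)); apply: imset_f.
have id_inj : injb (1%:M : 'M[k]_0) by apply/injbP=> v; rewrite mul1mx.
have id_surj : surjb (1%:M : 'M[k]_0) by apply/surjbP=> w; exists w; rewrite mul1mx.
split; apply/existsP; exists 1%:M; rewrite id_hom ?id_inj ?id_surj /= eq_sym.
  by apply/eqP/(nonempty_setT _ (1%:M *m 0))/imset_f.
by apply/eqP/(nonempty_setT _ 0); rewrite inE mulmx0.
Qed.

End ClassSums.

Section PrimitiveElements.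
Variables (Q : quiver) (s0 : {perm Q0 Q}) (s1 : {perm Q1 Q}).
Variables (k L : finFieldType) (emb : {rmorphism k -> L}) (C : numClosedFieldType).
Local Notation Mod := (Mod s0 s1 emb).
Variable x : forall m, Mod m -> C.

Lemma euler_dimv_mod0 (M : Mod 0) : euler s0 s1 (Defs.dimv M) (Defs.dimv M) = 0.
Proof.
have dimv0 j : Defs.dimv M j = 0%N by rewrite /Defs.dimv thinmx0 mxrank0 div0n.
by rewrite /euler !big1 ?subr0 // => j _; rewrite !dimv0 muln0.
Qed.

Lemma primitive_mod0 (M : Mod 0) : primitive x -> x M = 0.
Proof.
move/(_ 0%N 0%N M M); rewrite /coprod_coef (sum_cls_mod0 M) aut_mod0 hallnum_mod0.
by rewrite euler_dimv_mod0 expr0z !mulr1 invr1 mulr1 /= -{1}[x M]addr0 => /addrI <-.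
Qed.

Lemma Iform_homogeneous alpha : homogeneous x alpha ->
  Iform x alpha = sum_cls (fun M : Mod (totdim s0 alpha) => x M / (aut M)%:R).
Proof.
move=> [_ x_dim]; apply: eq_sum_cls => M; case: ifP => // /negbT Mdim.
suff -> : x M = 0 by rewrite mul0r.
apply: contraNeq Mdim => /x_dim Mdim; apply/forall_inP=> j jI; exact/eqP/Mdim.
Qed.

Lemma primitive_hall_sum m1 m2 (X : Mod m1) (Y : Mod m2) :
  primitive x -> (0 < m1)%N -> (0 < m2)%N ->
  sum_cls (fun M : Mod (m1 + m2) => x M / (aut M)%:R * (hallnum M X Y)%:R) = 0.
Proof.
move=> x_prim m1_gt0 m2_gt0.
set c := vpar k C ^ euler s0 s1 (Defs.dimv X) (Defs.dimv Y) * (aut X)%:R * (aut Y)%:R.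
have c_neq0 : c != 0.
  rewrite !mulf_neq0 ?pnatr_eq0 -?lt0n ?aut_gt0 // expfz_neq0 // sqrtC_eq0 pnatr_eq0 -lt0n.
  by apply/card_gt0P; exists 0.
suff : c * sum_cls (fun M : Mod (m1 + m2) => x M / (aut M)%:R * (hallnum M X Y)%:R) = 0.
  by move/eqP; rewrite mulf_eq0 (negbTE c_neq0) => /eqP.
have := x_prim m1 m2 X Y; rewrite !gtn_eqF // addr0 /coprod_coef => <-.
rewrite mulr_sum_cls; apply: eq_sum_cls => M; rewrite /c -!mulrA; apply/esym.
by do 3!(rewrite mulrCA; congr (_ * _)).
Qed.

Hypothesis autQ : quiver_aut s0 s1.

Lemma sum_hallnum_sink alpha i m1 m2 (M : Mod (m1 + m2)) :
  has_dimv M alpha -> (m1 + m2)%N = totdim s0 alpha -> i \in supp s0 alpha ->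
  (forall r : Path Q, porbit s0 (pstart r) = i ->
    porbit s0 (pend r) \in supp s0 alpha -> porbit s0 (pend r) = i) ->
  m2 = (#|i| * alpha i)%N ->
  sum_cls (fun X : Mod m1 => sum_cls (fun Y : Mod m2 =>
    ((if val Y (evec L i) == 1%:M then hallnum M X Y else 0%N)%:R : C))) = 1.
Proof.
move=> M_dim m_tot i_supp i_sink m2_eq; move: (i_supp); rewrite inE => /andP[iI ai].
have m_gt0 : (0 < m1 + m2)%N.
  by rewrite addn_gt0 m2_eq muln_gt0 (card_Iset_gt0 iI) (lt0n (alpha i)) ai orbT.
have e_i : val M (evec L i) = eM M [set i] by rewrite /eM -evec_eorbits.
have P_idem : val M (evec L i) *m val M (evec L i) = val M (evec L i).
  by rewrite e_i eM_mul ?setIid.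
have P_stable f : val M f *m val M (evec L i) = val M (evec L i) *m val M f *m val M (evec L i).
  by rewrite e_i (eM_sink_stable autQ m_gt0 M_dim m_tot i_supp i_sink).
have P_rank : \rank (val M (evec L i)) = m2 by rewrite e_i (rank_eM_porbit m_gt0 M_dim m_tot).
have [Y0 [X0 hall]] := exists_subquot_hallnum P_idem P_stable P_rank.
transitivity (sum_cls (fun X : Mod m1 =>
  (isob X0 X)%:R * sum_cls (fun Y : Mod m2 => ((isob Y0 Y)%:R : C)))).
  apply: eq_sum_cls => X; rewrite mulr_sum_cls; apply: eq_sum_cls => Y.
  by rewrite hall -mulnb natrM mulrC.
by under eq_sum_cls => X do rewrite sum_cls_isob mulr1; apply: sum_cls_isob.
Qed.

End PrimitiveElements.

Theorem proposition2p3
  (Q : quiver) (s0 : {perm Q0 Q}) (s1 : {perm Q1 Q})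
  (k L : finFieldType) (emb : {rmorphism k -> L}) (e : nat)
  (C : numClosedFieldType)
  (alpha : {set Q0 Q} -> nat)
  (x : forall m, Mod s0 s1 emb m -> C) :
  acyclic Q ->
  quiver_aut s0 s1 ->
  #|L| = (#|k| ^ e)%N -> (s0 ^+ e)%g = 1%g -> (s1 ^+ e)%g = 1%g ->
  in_fundamental s0 s1 alpha ->
  homogeneous x alpha ->
  primitive x ->
  Iform x alpha = 0.
Proof.
move=> acycQ autQ _ _ _ [_ alpha_fund] x_hom x_prim.
rewrite Iform_homogeneous //.
have [tot0|tot_gt0] := posnP (totdim s0 alpha).
  by rewrite tot0; apply: sum_cls_eq0 => M; rewrite primitive_mod0 ?mul0r.
have [v0 v0_supp] := totdim_gt0_support tot_gt0.
have [w w_supp w_sink] := exists_sink_porbit autQ acycQ v0_supp.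
have [j j_supp j_neq] := fundamental_support_not_single autQ acycQ alpha_fund w_supp.
have [m1 tot_split [m1_gt0 m2_gt0]] := totdim_split w_supp j_supp j_neq.
rewrite tot_split; apply: (sum_cls_partition_unity_eq0 (w := fun M X Y =>
  ((if val Y (evec L (porbit s0 w)) == 1%:M then hallnum M X Y else 0%N)%:R))).
- move=> M xM; have M_dim : has_dimv M alpha.
    by apply: x_hom.2; apply: contraNneq xM => ->; rewrite mul0r.
  exact: (sum_hallnum_sink C autQ M_dim (esym tot_split) w_supp w_sink erefl).
- move=> X Y; case: eqP => _; first exact: primitive_hall_sum.
  by apply: sum_cls_eq0 => M; rewrite mulr0.
Qed.
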